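(* Let $G$ be a countable group, let $\mathcal{L}:G\to[0,\infty)$ be subadditive (i.e.\ $\mathcal{L}(st)\le\mathcal{L}(s)+\mathcal{L}(t)$ for all $s,t\in G$), and let $\mu$ be a probability measure on $G$ with $\sum_{s\in G}\mu(s)\log(1+\mathcal{L}(s))<\infty$. Then \[ \mathrm{Ly}_{1+\mathcal{L}}(G,\mu)=\lim_{n\to\infty}\frac1n\sum_{s\in G}\mu^{*n}(s)\log(1+\mathcal{L}(s))=0. \]
   Context: $\mu^{*n}$ denotes the $n$-fold convolution power of $\mu$, where $\mu*\nu(s)=\sum_t\mu(t)\nu(t^{-1}s)$. *)

From mathcomp Require Import all_boot all_order all_algebra.
From mathcomp Require Import all_classical all_reals all_analysis.
Set Implicit Arguments. Unset Strict Implicit. Unset Printing Implicit Defensive.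
Import Order.TTheory GRing.Theory Num.Theory.
Local Open Scope classical_set_scope.
Local Open Scope ring_scope.

Definition is_group (G : Type) (mul : G -> G -> G) (inv : G -> G) (e : G) : Prop :=
  [/\ forall x y z, mul x (mul y z) = mul (mul x y) z,
      forall x, mul e x = x,
      forall x, mul x e = x,
      forall x, mul (inv x) x = e &
      forall x, mul x (inv x) = e].

Definition is_prob {R : realType} (G : choiceType) (mu : G -> R) : Prop :=
  (forall s, 0 <= mu s) /\ (\esum_(s in [set: G]) (mu s)%:E = 1)%E.

(* Convolution  (mu * nu)(s) = sum_t mu(t) nu(t^{-1} s)  (nonnegative terms;
   for probability measures the sum is finite, so [fine] is harmless). *)
Definition conv {R : realType} (G : choiceType) (mul : G -> G -> G) (inv : G -> G)
  (mu nu : G -> R) : G -> R :=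
  fun s => fine (\esum_(t in [set: G]) (mu t * nu (mul (inv t) s))%:E).

Fixpoint convpow {R : realType} (G : choiceType) (mul : G -> G -> G) (inv : G -> G)
  (e : G) (mu : G -> R) (n : nat) : G -> R :=
  match n with
  | 0 => fun s => if s == e then 1 else 0
  | n'.+1 => conv mul inv (convpow mul inv e mu n') mu
  end.

From Pilot Require Import Defs.
From mathcomp Require Import all_boot all_order all_algebra.
From mathcomp Require Import all_classical all_reals all_analysis.
From mathcomp Require Import finmap ring lra.
Set Implicit Arguments. Unset Strict Implicit. Unset Printing Implicit Defensive.
Import Order.TTheory GRing.Theory Num.Theory.
Local Open Scope classical_set_scope.
Local Open Scope ring_scope.

(* Choose a finite set X outside of which the log-moment of mu is at most d,
   and let M bound L on X.  By subadditivity
     ln (1 + c + L (t u)) <= ln (1 + (c + M) + L t) + [u \notin X] ln (1 + L u),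
   so one more convolution with mu costs at most the shift c |-> c + M plus d.
   Induction on n gives
     sum_s mu^{*n}(s) ln (1 + L s) <= ln (1 + L e + n M) + n d,
   and since ln grows sublinearly and d is arbitrary, the average tends to 0. *)

Section esum_lemmas.
Variables (R : realType) (T : choiceType).
Local Open Scope ereal_scope.

Lemma esumZl (I : set T) (r : R) (a : T -> \bar R) :
  (0 <= r)%R -> (forall i, 0 <= a i) ->
  \esum_(i in I) (r%:E * a i) = r%:E * \esum_(i in I) a i.
Proof.
move=> r0 a0; rewrite /esum -ereal_supZl//; last first.
  by apply/set0P; exists 0; exists set0; [exact: fsets_set0|rewrite fsbig_set0].
congr ereal_sup; apply/seteqP; split => x /=.
  by move=> [X XI <-]; exists (\sum_(i \in X) a i); [exists X|rewrite ge0_mule_fsumr].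
by move=> [_ [X XI <-] <-]; exists X => //; rewrite ge0_mule_fsumr.
Qed.

Lemma esum_dirac (x : T) (a : T -> \bar R) : 0 <= a x ->
  \esum_(i in [set: T]) (if i == x then a i else 0) = a x.
Proof.
move=> ax0; rewrite -[RHS]esum_set1 // [RHS]esum_mkcond.
by apply: eq_esum => i _; rewrite in_set1.
Qed.

Lemma esum_tail_small (a : T -> \bar R) (d : R) :
  (forall i, 0 <= a i) -> \esum_(i in [set: T]) a i < +oo -> (0 < d)%R ->
  exists2 X, finite_set X & \esum_(i in ~` X) a i <= d%:E.
Proof.
move=> a0 afin d0; set S := \esum_(i in [set: T]) a i in afin.
have S_fin : S = (fine S)%:E by rewrite fineK // ge0_fin_numE // esum_ge0.
have : (fine S - d)%:E < S by rewrite {2}S_fin lte_fin gtrBl.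
rewrite {2}/S => /ereal_sup_gt[_ [X [finX _] <-]]; rewrite -esum_fset // => ltX.
exists X => //; move: ltX.
have := esumID X [set: T] a (fun i _ => a0 i); rewrite !setTI -/S S_fin.
have : 0 <= \esum_(i in X) a i by exact: esum_ge0.
have : 0 <= \esum_(i in ~` X) a i by exact: esum_ge0.
case: (\esum_(i in X) a i) => [x||]; case: (\esum_(i in ~` X) a i) => [y||] //=.
by rewrite !lee_fin lte_fin => ? ? [?] ?; lra.
Qed.

Lemma exchange_esum (T' : choiceType) (a : T -> T' -> \bar R) :
  (forall i j, 0 <= a i j) ->
  \esum_(i in [set: T]) \esum_(j in [set: T']) a i j =
  \esum_(j in [set: T']) \esum_(i in [set: T]) a i j.
Proof.
move=> a0; rewrite !esum_esum //.
rewrite (reindex_esum ([set: T'] `*`` (fun=> [set: T]))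
   ([set: T] `*`` (fun=> [set: T'])) (fun z => (z.2, z.1))) //.
split=> [z //|[x y] [x' y'] _ _ /= [-> ->] //|[x y] _].
by exists (y, x).
Qed.

End esum_lemmas.

Lemma ln_le_ln (R : realType) (x y : R) : 0 < x -> x <= y -> ln x <= ln y.
Proof. by move=> x0 xy; rewrite ler_ln // posrE (lt_le_trans x0 xy). Qed.

Lemma ln1p_ge0 (R : realType) (x : R) : 0 <= x -> 0 <= ln (1 + x).
Proof. by move=> x0; apply: ln_ge0; rewrite lerDl. Qed.

Lemma ln_le_affine (R : realType) (x d : R) : 0 < x -> 0 < d -> ln x <= d * x - ln d.
Proof.
move=> x0 d0; have := ln_sublinear (mulr_gt0 d0 x0).
by rewrite lnM ?posrE // => /ltW; lra.
Qed.

Lemma ln_affine_sublinear (R : realType) (C M d : R) : 0 < C -> 0 <= M -> 0 < d ->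
  exists B, forall n : nat, ln (C + n%:R * M) <= B + n%:R * d.
Proof.
move=> C0 M0 d0; pose k := d / (M + 1).
have k0 : 0 < k by rewrite divr_gt0 //; lra.
have kM : k * M <= d by rewrite /k mulrAC ler_pdivrMr; [nra|lra].
exists (k * C - ln k) => n.
have n0 : 0 <= n%:R :> R by [].
by apply: le_trans (ln_le_affine _ k0) _; nra.
Qed.

Lemma sublinear_cvg0 (R : realType) (y : nat -> R) : (forall n, 0 <= y n) ->
  (forall d : R, 0 < d -> exists B : R, forall n, y n <= B + n%:R * d) ->
  (fun n => n%:R^-1 * y n) @ \oo --> 0.
Proof.
move=> y0 y_le; apply/cvgrPdist_le => d d0.
have [B yB] := y_le (d / 2) (divr_gt0 d0 (ltr0Sn _ 1)).
near=> n; rewrite sub0r normrN ger0_norm ?mulr_ge0 ?invr_ge0 //.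
have n0 : 0 < n%:R :> R by rewrite ltr0n; near: n; exact: nbhs_infty_gt.
rewrite ler_pdivrMl //; apply: le_trans (yB n) _.
have Bn : B <= n%:R * (d / 2).
  by rewrite -ler_pdivrMr ?divr_gt0 //; near: n; exact: nbhs_infty_ger.
by nra.
Unshelve. all: end_near. Qed.

Section convolution.
Variables (R : realType) (G : choiceType) (mul : G -> G -> G) (inv : G -> G) (e : G).
Hypothesis hG : is_group mul inv e.
Variable mu : G -> R.
Hypothesis hmu : is_prob mu.

Let mulKg t u : mul (inv t) (mul t u) = u.
Proof. by case: hG => mulA mul1g _ mulVg _; rewrite mulA mulVg mul1g. Qed.

Let mulKVg t s : mul t (mul (inv t) s) = s.
Proof. by case: hG => mulA mul1g _ _ mulgV; rewrite mulA mulgV mul1g. Qed.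

Lemma prob_le1 (nu : G -> R) u : is_prob nu -> nu u <= 1.
Proof.
case=> nu0 nu1; rewrite -lee_fin -nu1; apply: esum_ge; exists [set u].
  by split; [exact: finite_set1|].
by rewrite fsbig_set1.
Qed.

Lemma esum_conv (q : G -> R) (F : G -> R) : is_prob q -> (forall s, 0 <= F s) ->
  (\esum_(s in [set: G]) (Defs.conv mul inv q mu s * F s)%:E =
   \esum_(t in [set: G]) (q t)%:E * \esum_(u in [set: G]) (mu u * F (mul t u))%:E)%E.
Proof.
move=> [q0 q1] F0; have [mu0 _] := hmu.
have convE s : (Defs.conv mul inv q mu s)%:E =
    (\esum_(t in [set: G]) (q t * mu (mul (inv t) s))%:E)%E.
  rewrite fineK // ge0_fin_numE; last by apply: esum_ge0 => t _; rewrite lee_fin mulr_ge0.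
  apply: (@le_lt_trans _ _ 1%E); last exact: ltry.
  rewrite -q1; apply: le_esum => t _; rewrite lee_fin.
  by rewrite -[leRHS]mulr1 ler_wpM2l // prob_le1.
transitivity (\esum_(s in [set: G]) \esum_(t in [set: G])
    (q t * mu (mul (inv t) s) * F s)%:E)%E.
  apply: eq_esum => s _; rewrite EFinM convE muleC -esumZl //; last first.
    by move=> t; rewrite lee_fin mulr_ge0.
  by apply: eq_esum => t _; rewrite -EFinM mulrC.
rewrite exchange_esum; last by move=> s t; rewrite lee_fin !mulr_ge0.
apply: eq_esum => t _; rewrite -esumZl //; last by move=> u; rewrite lee_fin mulr_ge0.
have mul_bij : set_bij [set: G] [set: G] (mul t).
  by rewrite setTT_bijective; exists (mul (inv t)) => u; [exact: mulKg|exact: mulKVg].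
rewrite (reindex_esum _ _ _ _ mul_bij).
by apply: eq_esum => u _; rewrite mulKg -EFinM mulrA.
Qed.

Lemma convpow_prob n : is_prob (convpow mul inv e mu n).
Proof.
elim: n => [|n [pn0 pn1]] /=.
  split=> [s|]; first by case: ifP.
  rewrite -[RHS](@esum_dirac _ _ e (fun=> 1%E)) //.
  by apply: eq_esum => s _; case: ifP.
split=> [s|].
  by apply: fine_ge0; apply: esum_ge0 => t _; rewrite lee_fin mulr_ge0 // hmu.1.
transitivity (\esum_(s in [set: G]) (Defs.conv mul inv (convpow mul inv e mu n) mu s * 1)%:E)%E.
  by apply: eq_esum => s _; rewrite mulr1.
rewrite esum_conv // -[RHS]pn1; apply: eq_esum => t _.
by rewrite (eq_esum (fun u _ => congr1 EFin (mulr1 (mu u)))) hmu.2 mule1.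
Qed.

Section subadditive_length.
Variable L : G -> R.
Hypothesis L_ge0 : forall s, 0 <= L s.
Hypothesis L_subadd : forall s t, L (mul s t) <= L s + L t.

Let ln1pL_ge0 (c : R) s : 0 <= c -> 0 <= ln (1 + c + L s).
Proof. by move=> c0; rewrite -addrA ln1p_ge0 ?addr_ge0. Qed.

Lemma ln1pL_mul_le t u (c : R) : 0 <= c ->
  ln (1 + c + L (mul t u)) <= ln (1 + c + L t) + ln (1 + L u).
Proof.
move=> c0; have Lt := L_ge0 t; have Lu := L_ge0 u.
rewrite -lnM ?posrE; [|lra|lra]; apply: ln_le_ln; first by have := L_ge0 (mul t u); lra.
by have := L_subadd t u; nra.
Qed.

Lemma ln1pL_mul_bounded t u (c M : R) : 0 <= c -> L u <= M ->
  ln (1 + c + L (mul t u)) <= ln (1 + (c + M) + L t).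
Proof.
move=> c0 LuM; apply: ln_le_ln; first by have := L_ge0 (mul t u); lra.
by have := L_subadd t u; have := L_ge0 t; lra.
Qed.

Section tail.
Variables (S : set G) (M eps : R).
Hypothesis M_ge0 : 0 <= M.
Hypothesis L_le_M : forall u, S u -> L u <= M.
Hypothesis tail_le : (\esum_(u in ~` S) (mu u * ln (1 + L u))%:E <= eps%:E)%E.

Let eps_ge0 : 0 <= eps.
Proof.
rewrite -lee_fin; apply: le_trans tail_le; apply: esum_ge0 => u _.
by rewrite lee_fin mulr_ge0 ?hmu.1 ?ln1p_ge0.
Qed.

Lemma esum_ln1pL_mul_le t (c : R) : 0 <= c ->
  (\esum_(u in [set: G]) (mu u * ln (1 + c + L (mul t u)))%:E <=
   (ln (1 + (c + M) + L t) + eps)%:E)%E.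
Proof.
move=> c0; have [mu0 mu1] := hmu.
apply: (@le_trans _ _ (\esum_(u in [set: G]) ((mu u * ln (1 + (c + M) + L t))%:E +
    if u \in ~` S then (mu u * ln (1 + L u))%:E else 0))%E).
  apply: le_esum => u _; rewrite in_setC; case: ifPn => [uS|/negPn/set_mem uS].
    rewrite -EFinD lee_fin -mulrDr ler_wpM2l //.
    apply: le_trans (ln1pL_mul_le t u c0) _; rewrite lerD2r.
    by apply: ln_le_ln; have := L_ge0 t; have := M_ge0; lra.
  by rewrite adde0 lee_fin ler_wpM2l // ln1pL_mul_bounded // L_le_M.
rewrite esumD; last 2 first.
- by move=> u _; rewrite lee_fin mulr_ge0 // ln1pL_ge0 // addr_ge0.
- by move=> u _; case: ifP; rewrite // lee_fin mulr_ge0 ?ln1p_ge0.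
rewrite -esum_mkcond EFinD leeD //.
under eq_esum do rewrite mulrC EFinM.
by rewrite esumZl ?mu1 ?mule1 // ?ln1pL_ge0 ?addr_ge0 // => u; rewrite lee_fin.
Qed.

Lemma convpowS_ln1pL_le n (c : R) : 0 <= c ->
  (\esum_(s in [set: G]) (convpow mul inv e mu n.+1 s * ln (1 + c + L s))%:E <=
   \esum_(s in [set: G]) (convpow mul inv e mu n s * ln (1 + (c + M) + L s))%:E + eps%:E)%E.
Proof.
move=> c0; have [pn0 pn1] := convpow_prob n; have cM0 := addr_ge0 c0 M_ge0.
rewrite /= esum_conv //; last by move=> s; exact: ln1pL_ge0.
apply: (@le_trans _ _ (\esum_(t in [set: G])
    ((convpow mul inv e mu n t * ln (1 + (c + M) + L t))%:E +
     (convpow mul inv e mu n t)%:E * eps%:E))%E).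
  apply: le_esum => t _; rewrite -EFinM -EFinD -mulrDr EFinM.
  by apply: lee_wpmul2l; [rewrite lee_fin|exact: esum_ln1pL_mul_le].
rewrite esumD; last 2 first.
- by move=> t _; rewrite lee_fin mulr_ge0 // ln1pL_ge0.
- by move=> t _; rewrite -EFinM lee_fin mulr_ge0.
under [X in (_ + X)%E]eq_esum do rewrite muleC.
by rewrite esumZl // ?pn1 ?mule1.
Qed.

Lemma convpow_ln1pL_le n (c : R) : 0 <= c ->
  (\esum_(s in [set: G]) (convpow mul inv e mu n s * ln (1 + c + L s))%:E <=
   (ln (1 + c + L e + n%:R * M) + n%:R * eps)%:E)%E.
Proof.
elim: n c => [|n IH] c c0.
  rewrite /= (_ : esum _ _ = (ln (1 + c + L e))%:E) ?mul0r ?addr0 //.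
  rewrite -(@esum_dirac _ _ e (fun s => (ln (1 + c + L s))%:E)) ?lee_fin ?ln1pL_ge0 //.
  by apply: eq_esum => s _; case: ifP; rewrite ?mul1r ?mul0r.
have cM0 := addr_ge0 c0 M_ge0.
apply: le_trans (convpowS_ln1pL_le n c0) _.
apply: le_trans (leeD2r _ (IH _ cM0)) _.
rewrite -EFinD lee_fin -[n.+1]addn1 natrD.
have -> : 1 + (c + M) + L e + n%:R * M = 1 + c + L e + (n%:R + 1) * M by ring.
by have := eps_ge0; lra.
Qed.

End tail.

Lemma convpow_ln1pL_sublinear (d : R) :
  (\esum_(s in [set: G]) (mu s * ln (1 + L s))%:E < +oo)%E -> 0 < d ->
  exists B, forall n, (\esum_(s in [set: G]) (convpow mul inv e mu n s * ln (1 + L s))%:E <=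
                       (B + n%:R * d)%:E)%E.
Proof.
move=> mom_fin d0; have [mu0 _] := hmu.
have [X finX tail_le] : exists2 X, finite_set X &
    (\esum_(u in ~` X) (mu u * ln (1 + L u))%:E <= (d / 2)%:E)%E.
  apply: esum_tail_small => // [u|]; last by rewrite divr_gt0.
  by rewrite lee_fin mulr_ge0 ?ln1p_ge0.
pose M := \big[Num.max/0]_(x <- fset_set X) L x.
have M_ge0 : 0 <= M by exact: bigmax_ge_id.
have L_le_M u : X u -> L u <= M.
  by move=> Xu; apply: le_bigmax_seq => //; rewrite in_fset_set // mem_set.
have [B ln_le] : exists B, forall n : nat, ln (1 + L e + n%:R * M) <= B + n%:R * (d / 2).
  by apply: ln_affine_sublinear => //; [have := L_ge0 e; lra|rewrite divr_gt0].
exists B => n; have := convpow_ln1pL_le M_ge0 L_le_M tail_le n (lexx 0).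
rewrite !addr0 => /le_trans; apply; rewrite lee_fin.
by have := ln_le n; lra.
Qed.

End subadditive_length.
End convolution.

Theorem theorem3p6 (R : realType) (G : countType)
  (mul : G -> G -> G) (inv : G -> G) (e : G)
  (hG : is_group mul inv e)
  (L : G -> R) (hL0 : forall s, 0 <= L s)
  (hLsub : forall s t, L (mul s t) <= L s + L t)
  (mu : G -> R) (hmu : is_prob mu)
  (hmom : (\esum_(s in [set: G]) (mu s * ln (1 + L s))%:E < +oo)%E) :
  ((fun n : nat => (n%:R^-1)%:E *
      \esum_(s in [set: G]) (convpow mul inv e mu n s * ln (1 + L s))%:E)%E
     @ \oo --> 0%E).
Proof.
have sublin := convpow_ln1pL_sublinear hG hmu hL0 hLsub hmom.
set E := fun n : nat => \esum_(s in [set: G]) (convpow mul inv e mu n s * ln (1 + L s))%:E.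
have E_ge0 n : (0 <= E n)%E.
  by apply: esum_ge0 => s _; rewrite lee_fin mulr_ge0 ?ln1p_ge0 ?(convpow_prob hG hmu n).1.
have E_fin n : E n = (fine (E n))%:E.
  have [B E_le] := sublin 1 ltr01.
  by rewrite fineK // ge0_fin_numE // (le_lt_trans (E_le n)) ?ltry.
rewrite (_ : (fun n => _) = fun n => (n%:R^-1 * fine (E n))%:E); last first.
  by apply: funext => n; rewrite EFinM -E_fin.
apply: cvg_EFin; first exact: nearW.
apply: sublinear_cvg0 => [n|d d0]; first exact: fine_ge0.
have [B E_le] := sublin d d0; exists B => n; move: (E_le n).
by rewrite -lee_fin -E_fin.
Qed.
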